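(* Let $l,p,r>1$ be integers, $n=lpr$, and $A\in\{0,1\}^{n\times n}$. Then $A$ admits both an $(l,pr)$ factorization and a $(pl,r)$ factorization if and only if $A$ admits an $(l,p,r)$ factorization.
   Context: Binary matrices have entries in $\{0,1\}$; Kronecker products use Boolean arithmetic ($1+1=1$). For positive integers $n_1,\dots,n_m$ with $\prod n_i=n$, an $(n_1,\dots,n_m)$ factorization of $A\in\{0,1\}^{n\times n}$ is an expression $A=A_1\otimes\cdots\otimes A_m$ with $A_i\in\{0,1\}^{n_i\times n_i}$. *)

From mathcomp Require Import all_boot all_algebra.
Set Implicit Arguments. Unset Strict Implicit. Unset Printing Implicit Defensive.

(* entry of a square binary matrix at natural indices (false out of range) *)
Definition entry (m : nat) (A : 'M[bool]_m) (i j : nat) : bool :=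
  match @insub _ (fun k => k < m) 'I_m i, @insub _ (fun k => k < m) 'I_m j with
  | Some i', Some j' => A i' j'
  | _, _ => false
  end.

(* Kronecker product A (x) B with A : n1 x n1, B : n2 x n2, viewed as an
   n x n matrix (meaningful when n = n1 * n2):
   (A (x) B)_{i1*n2+i2, j1*n2+j2} = A_{i1 j1} && B_{i2 j2}.
   Only products (no sums) occur, so Boolean arithmetic is just && . *)
Definition kron (n n1 n2 : nat) (A : 'M[bool]_n1) (B : 'M[bool]_n2) : 'M[bool]_n :=
  \matrix_(i, j) (entry A (i %/ n2) (j %/ n2) && entry B (i %% n2) (j %% n2)).

Definition fact2 (n : nat) (n1 n2 : nat) (A : 'M[bool]_n) : Prop :=
  n1 * n2 = n /\
  exists (A1 : 'M[bool]_n1) (A2 : 'M[bool]_n2), A = kron n A1 A2.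

Definition fact3 (n : nat) (n1 n2 n3 : nat) (A : 'M[bool]_n) : Prop :=
  n1 * n2 * n3 = n /\
  exists (A1 : 'M[bool]_n1) (A2 : 'M[bool]_n2) (A3 : 'M[bool]_n3),
    A = kron n A1 (kron (n2 * n3) A2 A3).

From mathcomp Require Import all_boot all_algebra.
Set Implicit Arguments. Unset Strict Implicit.

(* Factorizations of both shapes give A = B1 (x) B2 = C1 (x) C2.  If some entry
   (a, b) of B1 is 1, the (a, b) block of size pr of A is B2 on one side and
   D (x) C2 on the other, D being the (a, b) block of size p of C1; hence
   A = B1 (x) D (x) C2.  If B1 = 0 then A = 0 = B1 (x) 0 (x) 0.  The converse is
   associativity of the Kronecker product. *)

Lemma entry_out m (A : 'M[bool]_m) i j :
  ~~ (i < m) || ~~ (j < m) -> entry A i j = false.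
Proof.
rewrite /entry; case: insubP => [i' Hi _|//]; case: insubP => [j' Hj _|//].
by rewrite Hi Hj.
Qed.

Lemma entry_ord m (A : 'M[bool]_m) (i j : 'I_m) : entry A i j = A i j.
Proof.
rewrite /entry; case: insubP => [i' _ /val_inj ->|]; last by rewrite ltn_ord.
by case: insubP => [j' _ /val_inj ->|]; last by rewrite ltn_ord.
Qed.

Lemma eq_mx_entry m (A B : 'M[bool]_m) :
  (forall i j : nat, entry A i j = entry B i j) -> A = B.
Proof. by move=> eqAB; apply/matrixP => i j; rewrite -!entry_ord eqAB. Qed.

Lemma entry_kron n n1 n2 (A : 'M[bool]_n1) (B : 'M[bool]_n2) i j :
  n1 * n2 = n ->
  entry (kron n A B) i j = entry A (i %/ n2) (j %/ n2) && entry B (i %% n2) (j %% n2).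
Proof.
move=> n12.
case: (ltnP i n) => Hi; case: (ltnP j n) => Hj.
- by rewrite (entry_ord _ (Ordinal Hi) (Ordinal Hj)) mxE.
all: rewrite entry_out; last by rewrite -!leqNgt ?Hi ?Hj ?orbT.
all: case: n2 B n12 => [|n2] B n12; first by rewrite [entry B _ _]entry_out ?andbF.
all: by rewrite [entry A _ _]entry_out // !ltn_divLR // n12 -!leqNgt ?Hi ?Hj ?orbT.
Qed.

Lemma entry_kron_block n n1 n2 (A : 'M[bool]_n1) (B : 'M[bool]_n2) a b i j :
  n1 * n2 = n -> i < n2 -> j < n2 ->
  entry (kron n A B) (a * n2 + i) (b * n2 + j) = entry A a b && entry B i j.
Proof.
move=> n12 Hi Hj; have n2_gt0 : 0 < n2 by apply: leq_ltn_trans Hi.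
by rewrite entry_kron // !divnMDl // !divn_small // !addn0 !modnMDl !modn_small.
Qed.

Lemma kron_zero_l n n1 n2 (A : 'M[bool]_n1) (B B' : 'M[bool]_n2) :
  (forall i j, A i j = false) -> kron n A B = kron n A B'.
Proof.
move=> A0; have entryA0 i j : entry A i j = false.
  by rewrite /entry; case: insub => // i'; case: insub.
by apply/matrixP => i j; rewrite !mxE entryA0.
Qed.

Lemma kronA n n1 n2 n3 (A1 : 'M[bool]_n1) (A2 : 'M[bool]_n2) (A3 : 'M[bool]_n3) :
  n1 * n2 * n3 = n ->
  kron n A1 (kron (n2 * n3) A2 A3) = kron n (kron (n1 * n2) A1 A2) A3.
Proof.
move=> n123; apply: eq_mx_entry => i j.
rewrite !entry_kron ?mulnA // -!modn_divl (mulnC n2 n3) !divnMA.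
by rewrite !(@modn_dvdm (n3 * n2)) ?dvdn_mulr // andbA.
Qed.

Definition subblock m a b k (M : 'M[bool]_k) : 'M[bool]_m :=
  \matrix_(i < m, j < m) entry M (a * m + i) (b * m + j).

Lemma entry_subblock m a b k (M : 'M[bool]_k) i j :
  entry (subblock m a b M) i j = [&& i < m, j < m & entry M (a * m + i) (b * m + j)].
Proof.
case: (ltnP i m) => Hi; case: (ltnP j m) => Hj /=.
- by rewrite (entry_ord _ (Ordinal Hi) (Ordinal Hj)) mxE.
all: by rewrite entry_out // -!leqNgt ?Hi ?Hj ?orbT.
Qed.

Lemma subblock_kron_id n n1 n2 (A : 'M[bool]_n1) (B : 'M[bool]_n2) a b :
  n1 * n2 = n -> entry A a b -> subblock n2 a b (kron n A B) = B.
Proof.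
move=> n12 Aab; apply: eq_mx_entry => i j; rewrite entry_subblock.
case: (ltnP i n2) => Hi; case: (ltnP j n2) => Hj /=.
- by rewrite entry_kron_block // Aab.
all: by rewrite entry_out // -!leqNgt ?Hi ?Hj ?orbT.
Qed.

Lemma subblock_kron n k m n2 (C1 : 'M[bool]_k) (C2 : 'M[bool]_n2) a b :
  k * n2 = n ->
  subblock (m * n2) a b (kron n C1 C2) = kron (m * n2) (subblock m a b C1) C2.
Proof.
move=> kn2.
have blockE c x : c * (m * n2) + x = (c * m + x %/ n2) * n2 + x %% n2.
  by rewrite mulnDl -addnA -divn_eq mulnA.
apply: eq_mx_entry => i j; rewrite entry_subblock [RHS]entry_kron // entry_subblock.
case: n2 C2 kn2 blockE => [|n2] C2 kn2 blockE.
  by rewrite muln0 ltn0 [entry C2 _ _]entry_out ?andbF.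
rewrite !ltn_divLR //.
case: (ltnP i (m * n2.+1)) => Hi; case: (ltnP j (m * n2.+1)) => Hj //=.
by rewrite !blockE entry_kron_block ?ltn_pmod.
Qed.

Lemma kron_refine n n1 n2 n3 (B1 : 'M[bool]_n1) (B2 : 'M[bool]_(n2 * n3))
    (C1 : 'M[bool]_(n2 * n1)) (C2 : 'M[bool]_n3) :
  n1 * n2 * n3 = n -> kron n B1 B2 = kron n C1 C2 ->
  exists D : 'M[bool]_n2, kron n B1 B2 = kron n B1 (kron (n2 * n3) D C2).
Proof.
move=> n123 eqBC.
have [[a b] /= B1ab | B1_0] := pickP (fun ab : 'I_n1 * 'I_n1 => B1 ab.1 ab.2).
  exists (subblock n2 a b C1); congr kron.
  have B1ab_entry : entry B1 a b by rewrite entry_ord.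
  rewrite -[B2](@subblock_kron_id n _ _ B1 B2 a b _ B1ab_entry) ?mulnA // eqBC.
  by rewrite subblock_kron // -n123 (mulnC n2).
by exists (const_mx false); apply: kron_zero_l => i j; apply: (B1_0 (i, j)).
Qed.

Theorem lemma5 (l p r : nat) (hl : 1 < l) (hp : 1 < p) (hr : 1 < r)
    (A : 'M[bool]_(l * p * r)) :
  (fact2 l (p * r) A /\ fact2 (p * l) r A) <-> fact3 l p r A.
Proof.
split.
- move=> [[_ [B1 [B2 ->]]] [_ [C1 [C2 eqBC]]]]; split=> //.
  have [D ->] := kron_refine erefl eqBC.
  by exists B1, D, C2.
- move=> [_ [A1 [A2 [A3 defA]]]]; split.
  + by split; [rewrite mulnA | exists A1, (kron (p * r) A2 A3)].
  + split; first by rewrite (mulnC p l).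
    by exists (kron (p * l) A1 A2), A3; rewrite defA kronA // (mulnC p l).
Qed.
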